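(* Let $q\ge2$ be a prime power, $d\ge6$, $2\le j\le d$, $1\le i\le d-3$, and $h_{\max}=\min\{j,d-i\}$. (i) If $j\le d-i-1$, then $\frac{43}{78}|T_{h_{\max}}(i,j)|\le|Q_j(i)|\le\frac{113}{78}|T_{h_{\max}}(i,j)|$. (ii) If $j=d-i$, then $\frac{691}{1296}|T_{h_{\max}}(i,j)|\le|Q_j(i)|\le\frac{1901}{1296}|T_{h_{\max}}(i,j)|$. (iii) If $j\ge d-i+1$, then $\frac{31}{216}|T_{h_{\max}}(i,j)|\le|Q_j(i)|\le\frac{401}{216}|T_{h_{\max}}(i,j)|$. In particular, $Q_j(i)$ has the same sign as $T_{h_{\max}}(i,j)$.
   Context: Let $b=-q$. For integers $m\ge0$ and $l$, ${m\brack l}_b=\prod_{t=1}^{l}\frac{b^{m-t+1}-1}{b^t-1}$ for $l\ge0$ and $0$ for $l<0$. For $0\le i,j\le d$, $$Q_j(i)=\sum_{h=0}^{\min\{j,d-i\}}(-1)^j(-q)^{\binom{j-h}{2}+hd}{d-h\brack d-j}_b{d-i\brack h}_b,$$ the eigenvalues of the Hermitian forms graph $Q_q(d,j)$. $T_h(i,j)$ denotes the $h$-th summand (including the factor $(-1)^j$). *)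

From mathcomp Require Import all_boot all_order all_algebra.
Set Implicit Arguments. Unset Strict Implicit. Unset Printing Implicit Defensive.
Import Order.TTheory GRing.Theory Num.Theory.
Local Open Scope ring_scope.

(* Gaussian binomial [m brack l]_b = prod_{t=1}^l (b^{m-t+1}-1)/(b^t-1), l >= 0.
   (In the statement all lower indices are naturals, so the l<0 case never arises.) *)
Definition gauss (b : rat) (m l : nat) : rat :=
  \prod_(1 <= t < l.+1) ((b ^+ (m - t + 1) - 1) / (b ^+ t - 1)).

Definition Tterm (q : nat) (d i j h : nat) : rat :=
  (-1) ^+ j * (- (q%:R : rat)) ^+ ('C(j - h, 2) + h * d)%N
  * gauss (- (q%:R)) (d - h) (d - j) * gauss (- (q%:R)) (d - i) h.

Definition Qeig (q : nat) (d i j : nat) : rat :=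
  \sum_(0 <= h < (minn j (d - i)).+1) Tterm q d i j h.

(* With b = -q, consecutive summands satisfy the exact recurrence
     T_h (b^(j-h) - 1) (b^(d-i-h) - 1) b^(d+1+h-j) = T_(h+1) (b^(d-h) - 1) (b^(h+1) - 1),
   which follows from two Pascal-type identities for Gaussian binomials.  As
   |b^n - 1| = q^n +- 1, the ratios |T_h| / |T_(h+1)| are bounded by explicit
   constants: case-specific ones for the last two steps and a uniform one for the
   earlier steps.  Summing the resulting geometric series bounds |Q_j(i) - T_hmax|
   by eps |T_hmax| with eps < 1 in each of the three cases, and an elementary
   perturbation lemma turns this into the two-sided estimates and the equality of
   signs. *)

From mathcomp Require Import all_boot all_order all_algebra.
From mathcomp Require Import ring lra zify.
Import Order.TTheory GRing.Theory Num.Theory.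
Local Open Scope ring_scope.

Section GaussianBinomial.
Variable b : rat.

Lemma gauss0 m : gauss b m 0 = 1.
Proof. by rewrite /gauss big_geq. Qed.

Lemma gaussS m l : (l < m)%N ->
  gauss b m l.+1 = gauss b m l * ((b ^+ (m - l) - 1) / (b ^+ l.+1 - 1)).
Proof.
move=> lm; rewrite /gauss big_nat_recr //=.
by have -> : (m - l.+1 + 1 = m - l)%N by lia.
Qed.

(* Pascal-type identity [M, L] (b^(M-L) - 1) = [M-1, L] (b^M - 1); it relates
   the first Gaussian binomial [d-h, d-j] of T_h to [d-h-1, d-j] in T_(h+1). *)
Lemma gauss_shift M L : (L < M)%N ->
  gauss b M L * (b ^+ (M - L) - 1) = gauss b M.-1 L * (b ^+ M - 1).
Proof.
elim: L => [|L IH] LM; first by rewrite !gauss0 subn0.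
rewrite (gaussS M) 1?(gaussS M.-1); try lia.
have -> : (M.-1 - L = M - L.+1)%N by lia.
transitivity (gauss b M L * (b ^+ (M - L) - 1) * ((b ^+ (M - L.+1) - 1) / (b ^+ L.+1 - 1))).
  by ring.
by rewrite IH; [ring | lia].
Qed.

(* The defining recursion with the denominator cleared; it relates the second
   Gaussian binomial [d-i, h] of T_h to [d-i, h+1] in T_(h+1). *)
Lemma gaussS_mul m l : (l < m)%N -> b ^+ l.+1 - 1 != 0 ->
  gauss b m l.+1 * (b ^+ l.+1 - 1) = gauss b m l * (b ^+ (m - l) - 1).
Proof. by move=> lm nz; rewrite gaussS //; field. Qed.

End GaussianBinomial.

Section GeometricDomination.
Variables (R : realFieldType) (u : nat -> R).
Hypothesis u_ge0 : forall h, 0 <= u h.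

Lemma geometric_tail n (r c : R) : 0 <= c -> (1 + c) * r <= c ->
  (forall h, (h < n)%N -> u h <= r * u h.+1) ->
  \sum_(0 <= h < n) u h <= c * u n.
Proof.
move=> c0 crc; elim: n => [|n IH] step; first by rewrite big_geq // mulr_ge0.
rewrite big_nat_recr //=.
have IHn := IH (fun h hn => step h (ltnW hn)).
have un := step n (ltnSn n); have := u_ge0 n; have := u_ge0 n.+1.
by nra.
Qed.

Lemma sum_before_last n (r1 r2 r3 c : R) : 0 <= r2 -> 0 <= c -> (1 + c) * r3 <= c ->
  u n.+1 <= r1 * u n.+2 -> u n <= r2 * u n.+1 ->
  (forall h, (h < n)%N -> u h <= r3 * u h.+1) ->
  \sum_(0 <= h < n.+2) u h <= r1 * (1 + r2 * (1 + c)) * u n.+2.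
Proof.
move=> r20 c0 crc last1 last2 step.
have tail := @geometric_tail n r3 c c0 crc step.
rewrite !big_nat_recr //=.
have mid : \sum_(0 <= h < n) u h + u n + u n.+1 <= (1 + r2 * (1 + c)) * u n.+1.
  have : (1 + c) * u n <= (1 + c) * (r2 * u n.+1) by apply: ler_wpM2l => //; lra.
  have -> : (1 + r2 * (1 + c)) * u n.+1 = u n.+1 + (1 + c) * (r2 * u n.+1) by ring.
  lra.
apply: (le_trans mid).
rewrite (_ : r1 * _ * u n.+2 = (1 + r2 * (1 + c)) * (r1 * u n.+2)); last by ring.
by apply: ler_wpM2l => //; nra.
Qed.

End GeometricDomination.

Lemma dominant_term {R : realFieldType} {Q T eps : R} :
  `|Q - T| <= eps * `|T| -> eps < 1 ->
  (1 - eps) * `|T| <= `|Q| /\ `|Q| <= (1 + eps) * `|T| /\ Num.sg Q = Num.sg T.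
Proof.
move=> dev e1.
have lower : `|T| - `|Q - T| <= `|Q|.
  by have := ler_normB Q (Q - T); rewrite opprB addrC subrK; lra.
have upper : `|Q| <= `|T| + `|Q - T|.
  by have := ler_normD T (Q - T); rewrite addrC subrK.
split; first lra; split; first lra.
have pos : 0 < 1 - eps by lra.
have dTQ : T - Q <= eps * `|T| by rewrite (distrC Q) in dev; apply: le_trans (ler_norm _) dev.
have dQT : Q - T <= eps * `|T| by apply: le_trans (ler_norm _) dev.
case: (ltrgt0P T) => [Tp|Tn|T0].
- rewrite gtr0_norm // in dTQ; have TP := mulr_gt0 pos Tp.
  by rewrite !gtr0_sg //; lra.
- rewrite ltr0_norm // in dQT; have TN : (1 - eps) * T < 0 by rewrite pmulr_rlt0.
  by rewrite !ltr0_sg //; lra.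
- rewrite T0 normr0 mulr0 subr0 in dev.
  have Q0 : Q = 0 by apply/normr0_eq0/le_anti; rewrite dev normr_ge0.
  by rewrite Q0 T0.
Qed.

Definition bfac (q n : nat) : rat := `|(- (q%:R : rat)) ^+ n - 1|.

Section Estimates.
Variable q : nat.
Hypothesis q2 : (2 <= q)%N.
Local Notation Q := (q%:R : rat).

Lemma Q_ge2 : 2 <= Q.
Proof. by rewrite (ler_nat _ 2 q). Qed.

Lemma Qpow_gt0 n : 0 < Q ^+ n.
Proof. by rewrite exprn_gt0 // (lt_le_trans _ Q_ge2). Qed.

Lemma Qpow_ge2pow n : 2 ^+ n <= Q ^+ n.
Proof. by rewrite lerXn2r ?nnegrE ?ler0n ?Q_ge2. Qed.

Lemma Qpow_ge_Qpow {k n} : (k <= n)%N -> Q ^+ k <= Q ^+ n.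
Proof. by move=> kn; rewrite ler_weXn2l // ler1n ltnW. Qed.

(* b^n <> 1 for n > 0, so Gaussian binomials in b are well defined. *)
Lemma bfac_neq0 {n} : (0 < n)%N -> (- Q) ^+ n - 1 != 0.
Proof.
move=> n0; rewrite subr_eq0; apply/eqP=> E.
have : `|(- Q) ^+ n| = 1 by rewrite E normr1.
rewrite normrX normrN ger0_norm ?ler0n // => Q1.
have := Qpow_ge2pow n; have : 2 <= (2 : rat) ^+ n by rewrite -[X in X <= _]expr1 ler_weXn2l.
rewrite Q1; lra.
Qed.

Lemma bfac_odd n : odd n -> bfac q n = Q ^+ n + 1.
Proof.
move=> on; rewrite /bfac exprNn -signr_odd on expr1 mulN1r -opprD normrN.
by rewrite ger0_norm // addr_ge0 ?ltW ?Qpow_gt0.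
Qed.

Lemma bfac_even n : ~~ odd n -> bfac q n = Q ^+ n - 1.
Proof.
move=> en; rewrite /bfac exprNn -signr_odd (negbTE en) expr0 mul1r.
by rewrite ger0_norm // subr_ge0 exprn_ege1 // ler1n ltnW.
Qed.

Lemma bfac1 : bfac q 1 = Q + 1.
Proof. by rewrite bfac_odd ?expr1. Qed.

Lemma bfac2 : bfac q 2 = Q ^+ 2 - 1.
Proof. exact: bfac_even. Qed.

Lemma bfac_near n : Q ^+ n - 1 <= bfac q n <= Q ^+ n + 1.
Proof. by case/boolP: (odd n) => [/bfac_odd|/bfac_even] ->; apply/andP; split; lra. Qed.

Lemma bfac_le_even n : ~~ odd n -> bfac q n <= Q ^+ n.
Proof. by move/bfac_even ->; lra. Qed.

(* Relative upper and lower bounds: for k <= n the error 1 is at most a 2^-k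
   fraction of Q ^+ n, since Q ^+ n >= 2 ^+ n >= 2 ^+ k. *)
Lemma Qpow_over_2pow {k n} : (k <= n)%N -> 1 <= Q ^+ n / 2 ^+ k.
Proof.
move=> kn; rewrite ler_pdivlMr ?exprn_gt0 // mul1r.
by apply: le_trans (Qpow_ge2pow n); rewrite ler_weXn2l.
Qed.

Lemma bfac_le {k n} : (k <= n)%N -> bfac q n <= (1 + 1 / 2 ^+ k) * Q ^+ n.
Proof.
move=> /Qpow_over_2pow; have /andP[_ up] := bfac_near n.
rewrite (_ : _ * Q ^+ n = Q ^+ n + Q ^+ n / 2 ^+ k); first lra.
by rewrite mul1r; ring.
Qed.

Lemma bfac_ge {k n} : (k <= n)%N -> (1 - 1 / 2 ^+ k) * Q ^+ n <= bfac q n.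
Proof.
move=> /Qpow_over_2pow; have /andP[low _] := bfac_near n.
rewrite (_ : _ * Q ^+ n = Q ^+ n - Q ^+ n / 2 ^+ k); first lra.
by rewrite mul1r; ring.
Qed.

(* A sharper upper bound for n >= 2: even n lose the +1, odd n have n >= 3. *)
Lemma bfac_le98 {n} : (2 <= n)%N -> bfac q n <= 9/8 * Q ^+ n.
Proof.
move=> n2; have Qn := Qpow_gt0 n.
case/boolP: (odd n) => [on|/bfac_le_even]; last lra.
have n3 : (3 <= n)%N by case: n n2 on Qn => [|[|[|]]].
by have := bfac_le n3; lra.
Qed.

Lemma bfac_ge_pow {k n} : (k <= n)%N -> Q ^+ k - 1 <= bfac q n.
Proof. by move=> /Qpow_ge_Qpow; have /andP[low _] := bfac_near n; lra. Qed.

Lemma bfac_ge9 {n} : (3 <= n)%N -> 9 <= bfac q n.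
Proof.
move=> n3; case/boolP: (odd n) => [/bfac_odd ->|en].
  by have := Qpow_over_2pow n3; lra.
have n4 : (4 <= n)%N by case: n n3 en => [|[|[|[|]]]].
by have := Qpow_over_2pow n4; rewrite (@bfac_even n en); lra.
Qed.

Lemma bfac_gt0 {n} : (0 < n)%N -> 0 < bfac q n.
Proof. by move=> n0; rewrite normr_gt0 bfac_neq0. Qed.

Lemma bfac_mul_le {a b} {ua ub : rat} :
  bfac q a <= ua * Q ^+ a -> bfac q b <= ub * Q ^+ b ->
  bfac q a * bfac q b <= ua * ub * (Q ^+ a * Q ^+ b).
Proof.
move=> Ha Hb; rewrite mulrACA; apply: ler_pM => //; apply: normr_ge0.
Qed.

Lemma Qpow2_ge0 a b : 0 <= Q ^+ a * Q ^+ b.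
Proof. by rewrite ltW ?mulr_gt0 ?Qpow_gt0. Qed.

(* Bounds on the products |b^a - 1| |b^b - 1| that appear as the factor
   (b^(d-h) - 1)(b^(h+1) - 1) of T_(h+1) in the recurrence. *)
Lemma bfac_pair_le a b : (2 <= a)%N -> (1 <= b)%N ->
  bfac q a * bfac q b <= 27/16 * (Q ^+ a * Q ^+ b).
Proof.
move=> a2 b1; apply: le_trans (bfac_mul_le (bfac_le98 a2) (bfac_le b1)) _.
by apply: ler_wpM2r; [exact: Qpow2_ge0 | lra].
Qed.

Lemma bfac_pair_le2 a b : (2 <= a)%N -> (2 <= b)%N ->
  bfac q a * bfac q b <= 81/64 * (Q ^+ a * Q ^+ b).
Proof.
move=> a2 b2; apply: le_trans (bfac_mul_le (bfac_le98 a2) (bfac_le98 b2)) _.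
by apply: ler_wpM2r; [exact: Qpow2_ge0 | lra].
Qed.

(* When a + b >= 7 one factor has exponent >= 4 and the other >= 3, or a = 2
   is even; either way the excess over Q ^+ (a + b) is at most 153/128. *)
Lemma bfac_pair_le3 a b : (2 <= a)%N -> (3 <= b)%N -> (7 <= a + b)%N ->
  bfac q a * bfac q b <= 153/128 * (Q ^+ a * Q ^+ b).
Proof.
move=> a2 b3 ab7.
have [a4|a_lt4] := leqP 4 a.
  apply: le_trans (bfac_mul_le (bfac_le a4) (bfac_le98 (ltnW b3))) _.
  by apply: ler_wpM2r; [exact: Qpow2_ge0 | lra].
have [->|a3] := eqVneq a 2.
  have e2 : bfac q 2 <= 1 * Q ^+ 2 by rewrite mul1r; apply: bfac_le_even.
  apply: le_trans (bfac_mul_le e2 (bfac_le98 (ltnW b3))) _.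
  by apply: ler_wpM2r; [exact: Qpow2_ge0 | lra].
have b4 : (4 <= b)%N by lia.
apply: le_trans (bfac_mul_le (bfac_le98 a2) (bfac_le b4)) _.
by apply: ler_wpM2r; [exact: Qpow2_ge0 | lra].
Qed.

Lemma factor_lower_bounds {c f} {lc lf : rat} (K rho : rat) :
  0 <= rho -> 0 <= lc -> 0 <= lf -> lc <= bfac q c -> lf <= bfac q f ->
  K * Q ^+ c <= rho * (lc * lf) -> K * Q ^+ c <= rho * (bfac q c * bfac q f).
Proof.
move=> rho0 lc0 lf0 Hc Hf H; apply: le_trans H _.
by apply: ler_wpM2l => //; apply: ler_pM.
Qed.

Section Summands.
Variables d i j : nat.
Hypothesis jd : (j <= d)%N.
Local Notation x := (- Q).
Local Notation T h := (Tterm q d i j h).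
Local Notation hmax := (minn j (d - i)).
Local Notation Qji := (Qeig q d i j).

(* Consecutive summands of Q_j(i) are related by factors of the form b^n - 1;
   E1 is the change of the exponent of b, G1 and G2 those of the two Gaussian
   binomials. *)
Lemma term_recurrence h : (h < j)%N -> (h < d - i)%N ->
  T h * ((x ^+ (j - h) - 1) * (x ^+ (d - i - h) - 1) * x ^+ (d + 1 + h - j))
  = T h.+1 * ((x ^+ (d - h) - 1) * (x ^+ h.+1 - 1)).
Proof.
move=> hj hdi; rewrite /Tterm.
have E1 : (('C(j - h, 2) + h * d) + (d + 1 + h - j) = 'C(j - h.+1, 2) + h.+1 * d)%N.
  have -> : (j - h = (j - h.+1).+1)%N by lia.
  rewrite binS bin1; have : (j - h.+1 <= d)%N by lia.
  by move: ('C(j - h.+1, 2)) => c; lia.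
have G1 := gauss_shift x (d - h) (d - j) ltac:(lia).
rewrite (_ : (d - h - (d - j) = j - h)%N) in G1; last lia.
rewrite (_ : ((d - h).-1 = d - h.+1)%N) in G1; last lia.
have G2 := gaussS_mul x (d - i) h ltac:(lia) (bfac_neq0 (ltn0Sn h)).
rewrite -E1 !exprD.
transitivity ((-1) ^+ j * (x ^+ 'C(j - h, 2) * x ^+ (h * d)) * x ^+ (d + 1 + h - j) *
   (gauss x (d - h) (d - j) * (x ^+ (j - h) - 1)) * (gauss x (d - i) h * (x ^+ (d - i - h) - 1))).
  by ring.
by rewrite G1 -G2; ring.
Qed.

Lemma term_ratio h (K rho : rat) : (h < j)%N -> (h < d - i)%N ->
  bfac q (d - h) * bfac q h.+1 <= K * (Q ^+ (d - h) * Q ^+ h.+1) ->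
  K * Q ^+ (j - h) <= rho * (bfac q (j - h) * bfac q (d - i - h)) ->
  `|T h| <= rho * `|T h.+1|.
Proof.
move=> hj hdi Hden Hnum.
pose X := bfac q (j - h) * bfac q (d - i - h) * Q ^+ (d + 1 + h - j).
have X0 : 0 < X.
  by rewrite !mulr_gt0 ?Qpow_gt0 // bfac_gt0 // subn_gt0.
have E : `|T h| * X = `|T h.+1| * (bfac q (d - h) * bfac q h.+1).
  have up : `|(x ^+ (j - h) - 1) * (x ^+ (d - i - h) - 1) * x ^+ (d + 1 + h - j)| = X.
    by rewrite /X !normrM normrX normrN normr_nat.
  have down : `|(x ^+ (d - h) - 1) * (x ^+ h.+1 - 1)| = bfac q (d - h) * bfac q h.+1.
    by rewrite normrM.
  have := congr1 Num.Def.normr (@term_recurrence h hj hdi).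
  by rewrite !(normrM (T _)) up down.
have HQ : Q ^+ (d - h) * Q ^+ h.+1 = Q ^+ (j - h) * Q ^+ (d + 1 + h - j).
  by rewrite -!exprD; congr (_ ^+ _); lia.
rewrite -(ler_pM2r X0) E (mulrC rho) -mulrA; apply: ler_wpM2l; first exact: normr_ge0.
apply: (le_trans Hden); rewrite HQ mulrA /X mulrA.
by apply: ler_wpM2r => //; apply/ltW/Qpow_gt0.
Qed.

Lemma deviation_le_sum : `|Qji - T hmax| <= \sum_(0 <= h < hmax) `|T h|.
Proof. by rewrite /Qeig big_nat_recr //= addrK; apply: ler_norm_sum. Qed.

Lemma dominant_tail {n} (r1 r2 r3 c : rat) : hmax = n.+2 ->
  0 <= r2 -> 0 <= c -> (1 + c) * r3 <= c ->
  `|T n.+1| <= r1 * `|T n.+2| -> `|T n| <= r2 * `|T n.+1| ->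
  (forall h, (h < n)%N -> `|T h| <= r3 * `|T h.+1|) ->
  `|Qji - T hmax| <= r1 * (1 + r2 * (1 + c)) * `|T hmax|.
Proof.
move=> mE r20 c0 crc last1 last2 step; apply: le_trans deviation_le_sum _.
rewrite mE; have u_ge0 h : 0 <= `|T h| by apply: normr_ge0.
exact: (@sum_before_last _ _ u_ge0 n r1 r2 r3 c r20 c0 crc last1 last2 step).
Qed.

Hypotheses (d6 : (6 <= d)%N) (i1 : (1 <= i)%N) (id3 : (i <= d - 3)%N) (j2 : (2 <= j)%N).

(* In each case the factor of T_(h+1) is bounded by one of the
   pair bounds above, and the two factors of T_h from below by q + 1, q^2 - 1,
   q^3 - 1, 9, 15 or a fraction (1 - 2^-k) of their leading power. *)
Lemma ratio_i_last h : (j <= d - i - 1)%N -> h.+1 = j -> `|T h| <= 9/32 * `|T h.+1|.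
Proof.
move=> ji hj; have Q2 := Q_ge2.
apply: (@term_ratio h (81/64)); [lia | lia | apply: bfac_pair_le2; lia |].
rewrite (_ : (j - h = 1)%N); last lia.
apply: (@factor_lower_bounds _ _ (Q + 1) (Q ^+ 2 - 1)); try nra.
- by rewrite bfac1.
- by apply: bfac_ge_pow; lia.
Qed.

Lemma ratio_i_second h : (j <= d - i - 1)%N -> h.+2 = j -> `|T h| <= 1/3 * `|T h.+1|.
Proof.
move=> ji hj; have Q2 := Q_ge2.
apply: (@term_ratio h (27/16)); [lia | lia | apply: bfac_pair_le; lia |].
rewrite (_ : (j - h = 2)%N); last lia.
have Q4 : 4 <= Q ^+ 2 by rewrite expr2; nra.
have Q8 : 8 <= Q ^+ 3 by rewrite exprS; nra.
have poly : 27/16 * Q ^+ 2 <= 1/3 * ((Q ^+ 2 - 1) * (Q ^+ 3 - 1)).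
  by rewrite [Q ^+ 3]exprS; nra.
apply: (@factor_lower_bounds _ _ (Q ^+ 2 - 1) (Q ^+ 3 - 1)); try lra.
- by rewrite bfac2.
- by apply: bfac_ge_pow; lia.
Qed.

Lemma ratio_i_early h : (j <= d - i - 1)%N -> (h + 3 <= j)%N -> `|T h| <= 1/7 * `|T h.+1|.
Proof.
move=> ji hj; have Qc := Qpow_gt0 (j - h); have Q16 := Qpow_ge2pow 4.
apply: (@term_ratio h (27/16)); [lia | lia | apply: bfac_pair_le; lia |].
apply: (@factor_lower_bounds _ _ ((1 - 1 / 2 ^+ 3) * Q ^+ (j - h)) 15); try lra.
- by apply: bfac_ge; lia.
- by have := @bfac_ge_pow 4 (d - i - h) ltac:(lia); lra.
Qed.

Lemma ratio_ii_last h : j = (d - i)%N -> h.+1 = j -> `|T h| <= 17/64 * `|T h.+1|.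
Proof.
move=> ji hj; have Q2 := Q_ge2.
apply: (@term_ratio h (153/128)); [lia | lia | apply: bfac_pair_le3; lia |].
rewrite (_ : (j - h = 1)%N) 1?(_ : (d - i - h = 1)%N); try lia.
apply: (@factor_lower_bounds _ _ (Q + 1) (Q + 1)); rewrite ?bfac1; nra.
Qed.

Lemma ratio_ii_second h : j = (d - i)%N -> h.+2 = j -> `|T h| <= 9/16 * `|T h.+1|.
Proof.
move=> ji hj; have Q2 := Q_ge2; have Q4 : 4 <= Q ^+ 2 by rewrite expr2; nra.
apply: (@term_ratio h (81/64)); [lia | lia | apply: bfac_pair_le2; lia |].
rewrite (_ : (j - h = 2)%N) 1?(_ : (d - i - h = 2)%N); try lia.
apply: (@factor_lower_bounds _ _ (Q ^+ 2 - 1) (Q ^+ 2 - 1)); rewrite ?bfac2; nra.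
Qed.

Lemma ratio_ii_early h : j = (d - i)%N -> (h + 3 <= j)%N -> `|T h| <= 3/14 * `|T h.+1|.
Proof.
move=> ji hj; have Qc := Qpow_gt0 (j - h).
apply: (@term_ratio h (27/16)); [lia | lia | apply: bfac_pair_le; lia |].
rewrite (_ : (d - i - h = j - h)%N); last lia.
apply: (@factor_lower_bounds _ _ ((1 - 1 / 2 ^+ 3) * Q ^+ (j - h)) 9); try lra.
- by apply: bfac_ge; lia.
- by apply: bfac_ge9; lia.
Qed.

Lemma ratio_iii_last h : (d - i + 1 <= j)%N -> h.+1 = (d - i)%N ->
  `|T h| <= 17/32 * `|T h.+1|.
Proof.
move=> ji hj; have Q2 := Q_ge2; have Qc := Qpow_gt0 (j - h).
apply: (@term_ratio h (153/128)); [lia | lia | apply: bfac_pair_le3; lia |].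
rewrite (_ : (d - i - h = 1)%N); last lia.
apply: (@factor_lower_bounds _ _ ((1 - 1 / 2 ^+ 2) * Q ^+ (j - h)) (Q + 1));
  rewrite ?bfac1; try nra.
by apply: bfac_ge; lia.
Qed.

Lemma ratio_iii_second h : (d - i + 1 <= j)%N -> h.+2 = (d - i)%N ->
  `|T h| <= 27/56 * `|T h.+1|.
Proof.
move=> ji hj; have Q2 := Q_ge2; have Qc := Qpow_gt0 (j - h).
have Q4 : 4 <= Q ^+ 2 by rewrite expr2; nra.
apply: (@term_ratio h (81/64)); [lia | lia | apply: bfac_pair_le2; lia |].
rewrite (_ : (d - i - h = 2)%N); last lia.
apply: (@factor_lower_bounds _ _ ((1 - 1 / 2 ^+ 3) * Q ^+ (j - h)) (Q ^+ 2 - 1));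
  rewrite ?bfac2; try nra.
by apply: bfac_ge; lia.
Qed.

Lemma ratio_iii_early h : (d - i + 1 <= j)%N -> (h + 3 <= d - i)%N ->
  `|T h| <= 1/5 * `|T h.+1|.
Proof.
move=> ji hj; have Qc := Qpow_gt0 (j - h).
apply: (@term_ratio h (27/16)); [lia | lia | apply: bfac_pair_le; lia |].
apply: (@factor_lower_bounds _ _ ((1 - 1 / 2 ^+ 4) * Q ^+ (j - h)) 9); try lra.
- by apply: bfac_ge; lia.
- by apply: bfac_ge9; lia.
Qed.

(* The deviation of Q_j(i) from its dominant summand in each of the three cases;
   the choice of c makes (1 + c) r3 <= c hold with equality. *)
Lemma deviation_i : (j <= d - i - 1)%N ->
  `|Qji - T hmax| <= 9/32 * (1 + 1/3 * (1 + 1/6)) * `|T hmax|.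
Proof.
move=> ji; apply: (@dominant_tail (j - 2) (9/32) (1/3) (1/7) (1/6));
  [lia | lra | lra | lra | | | move=> h hn].
- by apply: ratio_i_last; lia.
- by apply: ratio_i_second; lia.
- by apply: ratio_i_early; lia.
Qed.

Lemma deviation_ii : j = (d - i)%N ->
  `|Qji - T hmax| <= 17/64 * (1 + 9/16 * (1 + 3/11)) * `|T hmax|.
Proof.
move=> ji; apply: (@dominant_tail (j - 2) (17/64) (9/16) (3/14) (3/11));
  [lia | lra | lra | lra | | | move=> h hn].
- by apply: ratio_ii_last; lia.
- by apply: ratio_ii_second; lia.
- by apply: ratio_ii_early; lia.
Qed.

Lemma deviation_iii : (d - i + 1 <= j)%N ->
  `|Qji - T hmax| <= 17/32 * (1 + 27/56 * (1 + 1/4)) * `|T hmax|.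
Proof.
move=> ji; apply: (@dominant_tail (d - i - 2) (17/32) (27/56) (1/5) (1/4));
  [lia | lra | lra | lra | | | move=> h hn].
- by apply: ratio_iii_last; lia.
- by apply: ratio_iii_second; lia.
- by apply: ratio_iii_early; lia.
Qed.

Lemma estimate_i : (j <= d - i - 1)%N ->
  43%:R / 78%:R * `|T hmax| <= `|Qji| /\ `|Qji| <= 113%:R / 78%:R * `|T hmax|.
Proof.
move/deviation_i/dominant_term => [|lo [up _]]; first lra.
by have := normr_ge0 (T hmax); split; lra.
Qed.

Lemma estimate_ii : j = (d - i)%N ->
  691%:R / 1296%:R * `|T hmax| <= `|Qji| /\ `|Qji| <= 1901%:R / 1296%:R * `|T hmax|.
Proof.
move/deviation_ii/dominant_term => [|lo [up _]]; first lra.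
by have := normr_ge0 (T hmax); split; lra.
Qed.

Lemma estimate_iii : (d - i + 1 <= j)%N ->
  31%:R / 216%:R * `|T hmax| <= `|Qji| /\ `|Qji| <= 401%:R / 216%:R * `|T hmax|.
Proof.
move/deviation_iii/dominant_term => [|lo [up _]]; first lra.
by have := normr_ge0 (T hmax); split; lra.
Qed.

Lemma sign_agrees : Num.sg Qji = Num.sg (T hmax).
Proof.
have [small|large] := leqP j (d - i - 1).
  by have [|_ [_ ->]] := dominant_term (deviation_i small); first lra.
have [E|NE] := eqVneq j (d - i)%N.
  by have [|_ [_ ->]] := dominant_term (deviation_ii E); first lra.
by have [|_ [_ ->]] := dominant_term (deviation_iii ltac:(lia)); first lra.
Qed.

End Summands.
End Estimates.

Lemma prime_power_ge2 p k : prime p -> (0 < k)%N -> (2 <= p ^ k)%N.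
Proof.
move=> pp k0; apply: leq_trans (prime_gt1 pp) _.
by rewrite -{1}(expn1 p) leq_pexp2l // prime_gt0.
Qed.

Theorem lemma5p4 (p k q d i j : nat) :
  prime p -> (0 < k)%N -> q = (p ^ k)%N ->
  (6 <= d)%N -> (2 <= j <= d)%N -> (1 <= i <= d - 3)%N ->
  let hmax := minn j (d - i) in
  let T := Tterm q d i j hmax in
  let Q := Qeig q d i j in
  ((j <= d - i - 1)%N ->
     43%:R / 78%:R * `|T| <= `|Q| /\ `|Q| <= 113%:R / 78%:R * `|T|) /\
  (j = (d - i)%N ->
     691%:R / 1296%:R * `|T| <= `|Q| /\ `|Q| <= 1901%:R / 1296%:R * `|T|) /\
  ((d - i + 1 <= j)%N ->
     31%:R / 216%:R * `|T| <= `|Q| /\ `|Q| <= 401%:R / 216%:R * `|T|) /\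
  Num.sg Q = Num.sg T.
Proof.
move=> pp k0 qE d6 /andP[j2 jd] /andP[i1 id3] hmax T Q.
have q2 : (2 <= q)%N by rewrite qE prime_power_ge2.
split; [|split; [|split]].
- by apply: estimate_i.
- by apply: estimate_ii.
- by apply: estimate_iii.
- by apply: sign_agrees.
Qed.
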